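(* Let $p>1$ and $q>p-1$ with $q>0$, and let $f_{p,q}(t)=\sum_{j=1}^\infty j^{-p}\exp(i t j^q)$ for $t\in\mathbb{R}$. Then there is a constant $C<\infty$ such that for all $t,h\in\mathbb{R}$, $$|f_{p,q}(t+h)-f_{p,q}(t)|\le C|h|^{\alpha},\qquad \alpha=\frac{p-1}{q}.$$ *)

(* classical reals. Complex numbers are represented by
   their real and imaginary parts. *)
From Stdlib Require Export Reals.
Open Scope R_scope.

(* j-th term (j = n+1 >= 1) of f_{p,q}(t) = sum_{j>=1} j^{-p} exp(i t j^q):
   real part j^{-p} cos(t j^q), imaginary part j^{-p} sin(t j^q). *)
Definition term_re (p q t : R) (n : nat) : R :=
  Rpower (INR (S n)) (- p) * cos (t * Rpower (INR (S n)) q).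
Definition term_im (p q t : R) (n : nat) : R :=
  Rpower (INR (S n)) (- p) * sin (t * Rpower (INR (S n)) q).

Definition cmod (a b : R) : R := sqrt (a ^ 2 + b ^ 2).

(* Writing j = n + 1, the j-th terms of the series at t + h and at t differ by at most
   min (2 j^-p, |h| j^(q-p)), since cos and sin are bounded by 1 and 1-Lipschitz.
   Cutting the sum at N ~ |h|^(-1/q), the head is at most |h| N^(q-p+1) and the tail
   at most N^(1-p), up to constants; both are of order |h|^((p-1)/q).  *)

From Stdlib Require Import Reals Lra Lia ZArith.
Open Scope R_scope.

Lemma Rpower_gt0 x e : 0 < Rpower x e.
Proof. apply exp_pos. Qed.

Lemma Rpower_1_l e : Rpower 1 e = 1.
Proof. unfold Rpower; rewrite ln_1, Rmult_0_r; apply exp_0. Qed.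

Lemma Rpower_ge1 x e : 1 <= x -> 0 <= e -> 1 <= Rpower x e.
Proof. intros Hx He; rewrite <- (Rpower_O x) by lra; apply Rle_Rpower; lra. Qed.

Lemma Rle_Rpower_l_nonpos a b c : c <= 0 -> 0 < a <= b -> Rpower b c <= Rpower a c.
Proof.
  intros Hc Hab.
  replace c with (- (- c)) by ring.
  rewrite (Rpower_Ropp b), (Rpower_Ropp a).
  apply Rinv_le_contravar; [apply Rpower_gt0|].
  apply Rle_Rpower_l; lra.
Qed.

Lemma Rpower_succ_sub_mvt e y : 0 < y -> exists xi, y < xi < y + 1 /\
  Rpower (y + 1) e - Rpower y e = e * Rpower xi (e - 1).
Proof.
  intros Hy.
  destruct (MVT_cor2 (fun s => Rpower s e) (fun s => e * Rpower s (e - 1)) y (y + 1))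
    as [xi [E Hxi]]; [lra| |].
  - intros c Hc; apply derivable_pt_lim_power; lra.
  - exists xi; split; [lra|]; rewrite E; ring.
Qed.

Lemma Rpower_succ_sub_ge e y : 0 < y -> 0 <= e <= 1 ->
  e * Rpower (y + 1) (e - 1) <= Rpower (y + 1) e - Rpower y e.
Proof.
  intros Hy He.
  destruct (Rpower_succ_sub_mvt e y Hy) as [xi [Hxi ->]].
  apply Rmult_le_compat_l; [lra|].
  apply Rle_Rpower_l_nonpos; lra.
Qed.

Lemma Rpower_succ_sub_le e y : 0 < y -> e <= 0 ->
  Rpower (y + 1) e - Rpower y e <= e * Rpower (y + 1) (e - 1).
Proof.
  intros Hy He.
  destruct (Rpower_succ_sub_mvt e y Hy) as [xi [Hxi ->]].
  apply Rmult_le_compat_neg_l; [lra|].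
  apply Rle_Rpower_l_nonpos; lra.
Qed.

Lemma INR_S_ge1 n : 1 <= INR (S n).
Proof. rewrite S_INR; pose proof (pos_INR n); lra. Qed.

Lemma exists_INR_S_floor y : 1 <= y -> exists N : nat, INR (S N) <= y < INR (S N) + 1.
Proof.
  intros Hy; destruct (base_Int_part y) as [H1 H2].
  assert (Hk : (0 < Int_part y)%Z) by (apply lt_IZR; lra).
  exists (Z.to_nat (Int_part y) - 1)%nat.
  replace (S (Z.to_nat (Int_part y) - 1)) with (Z.to_nat (Int_part y)) by lia.
  rewrite INR_IZR_INZ, Z2Nat.id by lia; lra.
Qed.

Lemma sum_f_R0_le_telescoping (a T : nat -> R) N :
  (forall n, a (S n) <= T (S n) - T n) -> sum_f_R0 a N <= a O + (T N - T O).
Proof.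
  intros Ha; induction N as [|N IH]; simpl; [lra|].
  specialize (Ha N); lra.
Qed.

Lemma sum_f_R0_split_le (w A T : nat -> R) N0 M :
  (forall n, 0 <= A n) -> (forall n, 0 <= T n) ->
  (forall n, (n <= N0)%nat -> w n <= A n) ->
  (forall n, (N0 <= n)%nat -> w (S n) <= T n - T (S n)) ->
  sum_f_R0 w M <= sum_f_R0 A N0 + T N0.
Proof.
  intros HA HT Hhead Htail.
  pose proof (HT N0) as HT0.
  destruct (Compare_dec.le_lt_dec M N0) as [HM | HM].
  - assert (sum_f_R0 A M <= sum_f_R0 A N0).
    { destruct (le_lt_eq_dec _ _ HM) as [HMlt | ->]; [|lra].
      rewrite (tech2 A M N0 HMlt).
      pose proof (cond_pos_sum (fun i => A (S M + i)%nat) (N0 - S M) (fun n => HA _)).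
      lra. }
    assert (sum_f_R0 w M <= sum_f_R0 A M) by (apply sum_Rle; intros; apply Hhead; lia).
    lra.
  - rewrite (tech2 w N0 M HM).
    assert (sum_f_R0 w N0 <= sum_f_R0 A N0) by (apply sum_Rle; intros; apply Hhead; lia).
    assert (sum_f_R0 (fun i => w (S N0 + i)%nat) (M - S N0)
            <= w (S N0 + 0)%nat + (- T (S N0 + (M - S N0))%nat - - T (S N0 + O)%nat)).
    { apply (sum_f_R0_le_telescoping (fun i => w (S N0 + i)%nat) (fun i => - T (S N0 + i)%nat)).
      intros n; replace (S N0 + S n)%nat with (S (S N0 + n)) by lia.
      pose proof (Htail (S N0 + n)%nat ltac:(lia)); lra. }
    pose proof (Htail N0 (le_n _)).
    pose proof (HT (S N0 + (M - S N0))%nat).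
    rewrite Nat.add_0_r in *; lra.
Qed.

Lemma sum_Rpower_le r N : -1 < r ->
  sum_f_R0 (fun n => Rpower (INR (S n)) r) N <= (1 + / (r + 1)) * Rpower (INR (S N)) (r + 1).
Proof.
  intros Hr.
  assert (Hinv : 0 < / (r + 1)) by (apply Rinv_0_lt_compat; lra).
  pose proof (INR_S_ge1 N) as HN.
  pose proof (Rpower_gt0 (INR (S N)) (r + 1)).
  destruct (Rle_lt_dec 0 r) as [Hr0 | Hr0].
  - assert (sum_f_R0 (fun n => Rpower (INR (S n)) r) N <= Rpower (INR (S N)) (r + 1)).
    { eapply Rle_trans.
      - apply (sum_Rle _ (fun _ => Rpower (INR (S N)) r)); intros n Hn.
        apply Rle_Rpower_l; [lra|]; split; [pose proof (INR_S_ge1 n); lra|].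
        apply le_INR; lia.
      - rewrite sum_cte, Rpower_plus, Rpower_1 by lra; lra. }
    nra.
  - set (T n := / (r + 1) * Rpower (INR (S n)) (r + 1)).
    assert (sum_f_R0 (fun n => Rpower (INR (S n)) r) N <= Rpower 1 r + (T N - T O)).
    { apply sum_f_R0_le_telescoping; intros n; unfold T.
      pose proof (Rpower_succ_sub_ge (r + 1) (INR (S n)) ltac:(pose proof (INR_S_ge1 n); lra)
                    ltac:(lra)) as Hstep.
      rewrite <- S_INR in Hstep; replace (r + 1 - 1) with r in Hstep by ring.
      apply (Rmult_le_reg_l (r + 1)); [lra|].
      rewrite <- Rmult_minus_distr_l, <- Rmult_assoc, Rinv_r by lra; lra. }
    unfold T in *; rewrite Rpower_1_l in *.
    pose proof (Rpower_ge1 (INR (S N)) (r + 1) HN ltac:(lra)).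
    assert (0 < / (r + 1) * Rpower (INR 1) (r + 1)) by (apply Rmult_lt_0_compat; [lra|apply Rpower_gt0]).
    nra.
Qed.

Lemma infinite_sum_sub_le (f g w : nat -> R) a c B :
  infinite_sum f a -> infinite_sum g c ->
  (forall n, Rabs (f n - g n) <= w n) -> (forall M, sum_f_R0 w M <= B) ->
  Rabs (a - c) <= B.
Proof.
  intros Hf Hg Hw HB.
  apply (@Rle_cv_lim (fun n => Rabs (sum_f_R0 f n - sum_f_R0 g n)) (fun _ => B)).
  - intros n; rewrite <- minus_sum.
    eapply Rle_trans; [apply sum_f_R0_triangle|].
    eapply Rle_trans; [apply sum_Rle; intros; apply Hw | apply HB].
  - apply cv_cvabs, CV_minus; assumption.
  - intros eps Heps; exists O; intros n _.
    unfold Rdist; replace (B - B) with 0 by ring; rewrite Rabs_R0; lra.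
Qed.

Lemma Rabs_sub_le_of_derive_bound (F F' : R -> R) :
  (forall x, derivable_pt_lim F x (F' x)) -> (forall x, Rabs (F' x) <= 1) ->
  forall A B, Rabs (F A - F B) <= Rabs (A - B).
Proof.
  intros HD Hb A B.
  destruct (MVT_abs F F' B A (fun c _ => HD c)) as [c [-> _]].
  pose proof (Hb c); pose proof (Rabs_pos (A - B)); nra.
Qed.

Lemma Rabs_cos_sub_le A B : Rabs (cos A - cos B) <= Rabs (A - B).
Proof.
  apply (Rabs_sub_le_of_derive_bound cos (fun x => - sin x)); [apply derivable_pt_lim_cos|].
  intros x; rewrite Rabs_Ropp; apply Rabs_le, SIN_bound.
Qed.

Lemma Rabs_sin_sub_le A B : Rabs (sin A - sin B) <= Rabs (A - B).
Proof.
  apply (Rabs_sub_le_of_derive_bound sin cos); [apply derivable_pt_lim_sin|].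
  intros x; apply Rabs_le, COS_bound.
Qed.

Lemma cmod_le_Rabs_add u v : cmod u v <= Rabs u + Rabs v.
Proof.
  unfold cmod.
  pose proof (Rabs_pos u); pose proof (Rabs_pos v).
  rewrite <- (sqrt_pow2 (Rabs u + Rabs v)) by lra.
  apply sqrt_le_1_alt.
  rewrite <- (pow2_abs u), <- (pow2_abs v); nra.
Qed.

Section WaveSum.

Variables (F : R -> R) (p q : R).
Hypotheses (hp : 1 < p) (hq1 : p - 1 < q) (hq0 : 0 < q).
Hypothesis F_Lipschitz : forall A B, Rabs (F A - F B) <= Rabs (A - B).
Hypothesis F_bounded : forall x, Rabs (F x) <= 1.

Definition wave_term (s : R) (n : nat) : R :=
  Rpower (INR (S n)) (- p) * F (s * Rpower (INR (S n)) q).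

Lemma wave_term_sub_le_amplitude t h n :
  Rabs (wave_term (t + h) n - wave_term t n) <= 2 * Rpower (INR (S n)) (- p).
Proof.
  unfold wave_term.
  pose proof (Rpower_gt0 (INR (S n)) (- p)).
  rewrite <- Rmult_minus_distr_l, Rabs_mult, (Rabs_pos_eq (Rpower _ (- p))) by lra.
  pose proof (F_bounded ((t + h) * Rpower (INR (S n)) q)).
  pose proof (F_bounded (t * Rpower (INR (S n)) q)).
  pose proof (Rabs_triang (F ((t + h) * Rpower (INR (S n)) q)) (- F (t * Rpower (INR (S n)) q))).
  rewrite Rabs_Ropp in *.
  rewrite Rmult_comm; apply Rmult_le_compat_r; [lra|].
  unfold Rminus; lra.
Qed.

Lemma wave_term_sub_le_Lipschitz t h n :
  Rabs (wave_term (t + h) n - wave_term t n) <= Rpower (INR (S n)) (q - p) * Rabs h.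
Proof.
  unfold wave_term.
  pose proof (Rpower_gt0 (INR (S n)) (- p)).
  pose proof (Rpower_gt0 (INR (S n)) q).
  rewrite <- Rmult_minus_distr_l, Rabs_mult, (Rabs_pos_eq (Rpower _ (- p))) by lra.
  eapply Rle_trans; [apply Rmult_le_compat_l; [lra | apply F_Lipschitz]|].
  replace ((t + h) * Rpower (INR (S n)) q - t * Rpower (INR (S n)) q)
    with (h * Rpower (INR (S n)) q) by ring.
  rewrite Rabs_mult, (Rabs_pos_eq (Rpower _ q)) by lra.
  replace (q - p) with (q + - p) by ring.
  rewrite Rpower_plus; right; ring.
Qed.

Lemma wave_sum_sub_le t h a c N0 (A : nat -> R) :
  infinite_sum (wave_term (t + h)) a -> infinite_sum (wave_term t) c ->
  (forall n, 0 <= A n) ->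
  (forall n, (n <= N0)%nat -> Rabs (wave_term (t + h) n - wave_term t n) <= A n) ->
  Rabs (a - c) <= sum_f_R0 A N0 + 2 / (p - 1) * Rpower (INR (S N0)) (1 - p).
Proof.
  intros Ha Hc HA Hhead.
  assert (Hk : 0 < 2 / (p - 1)) by (apply Rdiv_lt_0_compat; lra).
  apply (infinite_sum_sub_le _ _ _ a c _ Ha Hc (fun n => Rle_refl _)).
  intros M.
  apply (sum_f_R0_split_le _ A (fun n => 2 / (p - 1) * Rpower (INR (S n)) (1 - p)));
    [exact HA | intros n; pose proof (Rpower_gt0 (INR (S n)) (1 - p)); nra | exact Hhead |].
  intros n _.
  eapply Rle_trans; [apply wave_term_sub_le_amplitude|].
  pose proof (Rpower_succ_sub_le (1 - p) (INR (S n))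
                ltac:(pose proof (INR_S_ge1 n); lra) ltac:(lra)) as Hstep.
  rewrite <- S_INR in Hstep; replace (1 - p - 1) with (- p) in Hstep by ring.
  apply (Rmult_le_reg_l ((p - 1) / 2)); [lra|].
  unfold Rdiv; field_simplify; [lra | lra].
Qed.

Lemma Rpower_head_scale x N : 0 < x -> 0 < N <= Rpower x (- / q) ->
  x * Rpower N (q - p + 1) <= Rpower x ((p - 1) / q).
Proof.
  intros Hx HN.
  assert (Rpower N (q - p + 1) <= Rpower x (- / q * (q - p + 1))).
  { rewrite <- Rpower_mult; apply Rle_Rpower_l; lra. }
  replace (Rpower x ((p - 1) / q)) with (Rpower x 1 * Rpower x (- / q * (q - p + 1))).
  - rewrite Rpower_1 by lra; apply Rmult_le_compat_l; lra.
  - rewrite <- Rpower_plus; f_equal; field; lra.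
Qed.

Lemma Rpower_tail_scale x N : 0 < x -> 0 < N -> Rpower x (- / q) < 2 * N ->
  Rpower N (1 - p) <= Rpower 2 (p - 1) * Rpower x ((p - 1) / q).
Proof.
  intros Hx HN Hy.
  pose proof (Rpower_gt0 x (- / q)).
  eapply Rle_trans; [apply (Rle_Rpower_l_nonpos (Rpower x (- / q) * / 2)); lra|].
  rewrite <- Rpower_mult_distr, Rpower_mult by lra.
  replace (Rpower (/ 2) (1 - p)) with (Rpower 2 (p - 1))
    by (unfold Rpower; rewrite ln_Rinv by lra; f_equal; ring).
  replace (- / q * (1 - p)) with ((p - 1) / q) by (field; lra).
  lra.
Qed.

Lemma wave_sum_sub_le_large t h a c :
  infinite_sum (wave_term (t + h)) a -> infinite_sum (wave_term t) c -> 1 <= Rabs h ->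
  Rabs (a - c) <= (2 + 2 / (p - 1)) * Rpower (Rabs h) ((p - 1) / q).
Proof.
  intros Ha Hc Hh.
  assert (Hk : 0 < 2 / (p - 1)) by (apply Rdiv_lt_0_compat; lra).
  pose proof (Rpower_ge1 (Rabs h) ((p - 1) / q) Hh
                ltac:(left; apply Rdiv_lt_0_compat; lra)).
  eapply Rle_trans.
  - apply (wave_sum_sub_le t h a c O (fun n => 2 * Rpower (INR (S n)) (- p)) Ha Hc).
    + intros n; pose proof (Rpower_gt0 (INR (S n)) (- p)); lra.
    + intros n _; apply wave_term_sub_le_amplitude.
  - simpl sum_f_R0; replace (INR 1) with 1 by reflexivity.
    rewrite !Rpower_1_l; nra.
Qed.

Lemma wave_sum_sub_le_small t h a c :
  infinite_sum (wave_term (t + h)) a -> infinite_sum (wave_term t) c -> 0 < Rabs h < 1 ->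
  Rabs (a - c) <= (1 + / (q - p + 1) + 2 / (p - 1) * Rpower 2 (p - 1))
                  * Rpower (Rabs h) ((p - 1) / q).
Proof.
  intros Ha Hc Hh.
  set (x := Rabs h) in *.
  assert (Hy : 1 <= Rpower x (- / q)).
  { rewrite <- (Rpower_1_l (- / q)).
    apply Rle_Rpower_l_nonpos; [|lra].
    pose proof (Rinv_0_lt_compat q hq0); lra. }
  destruct (exists_INR_S_floor _ Hy) as [N0 HN0].
  pose proof (INR_S_ge1 N0) as HN.
  set (N := INR (S N0)) in *.
  assert (Hinv : 0 < / (q - p + 1)) by (apply Rinv_0_lt_compat; lra).
  assert (Hk : 0 < 2 / (p - 1)) by (apply Rdiv_lt_0_compat; lra).
  eapply Rle_trans.
  - apply (wave_sum_sub_le t h a c N0 (fun n => Rpower (INR (S n)) (q - p) * x) Ha Hc).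
    + intros n; pose proof (Rpower_gt0 (INR (S n)) (q - p)); pose proof (Rabs_pos h); nra.
    + intros n _; apply wave_term_sub_le_Lipschitz.
  - rewrite <- scal_sum; fold N.
    pose proof (sum_Rpower_le (q - p) N0 ltac:(lra)) as Hhead; fold N in Hhead.
    pose proof (Rpower_head_scale x N ltac:(lra) ltac:(lra)).
    pose proof (Rpower_tail_scale x N ltac:(lra) ltac:(lra) ltac:(lra)).
    assert (x * sum_f_R0 (fun n => Rpower (INR (S n)) (q - p)) N0
            <= (1 + / (q - p + 1)) * (x * Rpower N (q - p + 1))) by nra.
    assert (2 / (p - 1) * Rpower N (1 - p)
            <= 2 / (p - 1) * (Rpower 2 (p - 1) * Rpower x ((p - 1) / q))) by nra.
    nra.
Qed.

Definition wave_Holder_const : R :=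
  (1 + / (q - p + 1) + 2 / (p - 1) * Rpower 2 (p - 1)) + (2 + 2 / (p - 1)).

Lemma wave_sum_Holder t h a c :
  infinite_sum (wave_term (t + h)) a -> infinite_sum (wave_term t) c ->
  Rabs (a - c) <= wave_Holder_const * Rpower (Rabs h) ((p - 1) / q).
Proof.
  intros Ha Hc.
  assert (Hinv : 0 < / (q - p + 1)) by (apply Rinv_0_lt_compat; lra).
  assert (Hk : 0 < 2 / (p - 1)) by (apply Rdiv_lt_0_compat; lra).
  assert (0 < 2 / (p - 1) * Rpower 2 (p - 1)) by (apply Rmult_lt_0_compat; [lra | apply Rpower_gt0]).
  pose proof (Rpower_gt0 (Rabs h) ((p - 1) / q)).
  unfold wave_Holder_const.
  destruct (Req_dec h 0) as [-> | Hh0].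
  - rewrite Rplus_0_r in Ha; rewrite (uniqueness_sum _ _ _ Ha Hc), Rminus_diag, Rabs_R0.
    apply Rmult_le_pos; [lra | left; apply Rpower_gt0].
  - pose proof (Rabs_pos_lt h Hh0).
    destruct (Rle_lt_dec 1 (Rabs h)).
    + pose proof (wave_sum_sub_le_large t h a c Ha Hc ltac:(lra)); nra.
    + pose proof (wave_sum_sub_le_small t h a c Ha Hc ltac:(lra)); nra.
Qed.

End WaveSum.

Theorem mainTheorem9 (p q : R) (hp : 1 < p) (hq1 : p - 1 < q) (hq0 : 0 < q) :
  exists C : R,
    forall t h : R, forall a b c d : R,
      infinite_sum (term_re p q (t + h)) a ->
      infinite_sum (term_im p q (t + h)) b ->
      infinite_sum (term_re p q t) c ->
      infinite_sum (term_im p q t) d ->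
      cmod (a - c) (b - d) <= C * Rpower (Rabs h) ((p - 1) / q).
Proof.
  exists (2 * wave_Holder_const p q).
  intros t h a b c d Ha Hb Hc Hd.
  pose proof (wave_sum_Holder cos p q hp hq1 hq0 Rabs_cos_sub_le
                (fun x => Rabs_le _ _ (COS_bound x)) t h a c Ha Hc).
  pose proof (wave_sum_Holder sin p q hp hq1 hq0 Rabs_sin_sub_le
                (fun x => Rabs_le _ _ (SIN_bound x)) t h b d Hb Hd).
  pose proof (cmod_le_Rabs_add (a - c) (b - d)).
  lra.
Qed.
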